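(* Let $\mathcal C$ be an infinitary clone $\tau$-algebra and $a\in C$. Then $a$ is central if and only if the following hold for all elements of $C$: (C1) $q(a,x,x,\dots)=x$; (C2) $q\big(a,\,q(a,x_0^0,x_0^1,\dots),\,q(a,x_1^0,x_1^1,\dots),\,q(a,x_2^0,x_2^1,\dots),\dots\big)=q(a,x_0^0,x_1^1,x_2^2,\dots)$; (C3) $q\big(a,\,q(y_0,z_0^0,z_1^0,\dots),\,q(y_1,z_0^1,z_1^1,\dots),\dots\big)=q\big(q(a,y_0,y_1,\dots),\,q(a,z_0^0,z_0^1,\dots),\,q(a,z_1^0,z_1^1,\dots),\dots\big)$.
   Context: $\tau$ is a set of $\omega$-ary operation symbols disjoint from $\{q\}\cup\{e_i:i\in\omega\}$. An infinitary clone $\tau$-algebra is an algebra $\mathcal C$ with constants $e_i$ ($i\in\omega$), a constant $f$ for each $f\in\tau$, and an $\omega$-ary operation $q$, satisfying (N1) $q(e_i,x_0,x_1,\dots)=x_i$; (N2) $q(x,e_0,e_1,\dots)=x$; (N3) $q(q(x,y_0,y_1,\dots),\boldsymbol z)=q(x,q(y_0,\boldsymbol z),q(y_1,\boldsymbol z),\dots)$ with $\boldsymbol z=(z_0,z_1,\dots)$. A sequence $(\theta_0,\theta_1,\dots)$ of congruences of $\mathcal C$ is a sequence of complementary factor congruences if $\bigcap_{i\in\omega}\theta_i$ is the identity relation on $C$ and for every $s\in C^\omega$ there is $b\in C$ with $(b,s_i)\in\theta_i$ for all $i\in\omega$. An element $a\in C$ is central if the principal congruences $\theta(a,e_i)$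 generated by the pairs $(a,e_i)$, $i\in\omega$, form a sequence of complementary factor congruences. *)

Record ICA (tau : Type) := {
  carrier :> Type;
  e : nat -> carrier;
  fconst : tau -> carrier;
  q : carrier -> (nat -> carrier) -> carrier;
  N1 : forall (i : nat) (x : nat -> carrier), q (e i) x = x i;
  N2 : forall x : carrier, q x e = x;
  N3 : forall (x : carrier) (y z : nat -> carrier),
         q (q x y) z = q x (fun i => q (y i) z)
}.

Arguments e {tau} _ _.
Arguments fconst {tau} _ _.
Arguments q {tau} _ _ _.

(** The constants (e_i and the f in tau) are trivially compatible; the only
    non-trivial condition is compatibility with the omega-ary q. *)
Definition congruence {tau} (C : ICA tau) (R : C -> C -> Prop) : Prop :=
  (forall x, R x x) /\
  (forall x y, R x y -> R y x) /\
  (forall x y z, R x y -> R y z -> R x z) /\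
  (forall (x y : C) (s t : nat -> C),
      R x y -> (forall i, R (s i) (t i)) -> R (q C x s) (q C y t)).

Definition principal_cong {tau} (C : ICA tau) (a b : C) : C -> C -> Prop :=
  fun x y => forall R, congruence C R -> R a b -> R x y.

Definition complementary_factor_congruences {tau} (C : ICA tau)
    (theta : nat -> C -> C -> Prop) : Prop :=
  (forall i, congruence C (theta i)) /\
  (forall x y : C, (forall i, theta i x y) -> x = y) /\
  (forall s : nat -> C, exists b : C, forall i, theta i b (s i)).

Definition central {tau} (C : ICA tau) (a : C) : Prop :=
  complementary_factor_congruences C (fun i => principal_cong C a (e C i)).

From Stdlib Require Import PeanoNat FunctionalExtensionality.

(** Since [q a s] and [q (e i) s = s i] are [theta(a, e_i)]-related, every
    identity (C1)-(C3) holds modulo each [theta(a, e_i)] (both sides reduce to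
    the same [i]-th coordinate), hence holds outright when these congruences
    meet in the identity.  Conversely, under (C1)-(C3) the relation
    "[q a] cannot tell [x] from [y] in position [i]" is a congruence containing
    [(a, e_i)]; so [theta(a, e_i)] is contained in it, which separates points,
    and [q a s] is the element with prescribed coordinates [s]. *)

Section Central.

Variable tau : Type.
Variable C : ICA tau.
Variable a : C.

Lemma principal_cong_congruence (b : C) : congruence C (principal_cong C a b).
Proof.
  unfold principal_cong; split; [|split; [|split]].
  - intros x R [Hrefl _] _; apply Hrefl.
  - intros x y Hxy R HR Hab; pose proof HR as [_ [Hsym _]]; apply Hsym, Hxy; auto.
  - intros x y z Hxy Hyz R HR Hab; pose proof HR as [_ [_ [Htrans _]]].
    apply (Htrans x y z); [apply Hxy | apply Hyz]; auto.
  - intros x y s t Hxy Hst R HR Hab; pose proof HR as [_ [_ [_ Hq]]].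
    apply Hq; [apply Hxy | intro k; apply Hst]; auto.
Qed.

Lemma principal_cong_q_coord (i : nat) (s : nat -> C) :
  principal_cong C a (e C i) (q C a s) (s i).
Proof.
  rewrite <- (N1 _ C i s).
  destruct (principal_cong_congruence (e C i)) as [Hrefl [_ [_ Hq]]].
  apply Hq; [intros R _ Hab; exact Hab | intro k; apply Hrefl].
Qed.

Lemma central_eq_of_coords (x y : C) (u : nat -> C) :
  central C a ->
  (forall i, principal_cong C a (e C i) x (u i)) ->
  (forall i, principal_cong C a (e C i) y (u i)) ->
  x = y.
Proof.
  intros [Hcong [Hsep _]] Hx Hy; apply Hsep; intro i.
  destruct (Hcong i) as [_ [Hsym [Htrans _]]].
  apply (Htrans _ (u i)); [apply Hx | apply Hsym, Hy].
Qed.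

Lemma central_C1 : central C a -> forall x : C, q C a (fun _ => x) = x.
Proof.
  intros Ha x; apply (central_eq_of_coords _ _ (fun _ => x) Ha).
  - intro i; apply (principal_cong_q_coord i (fun _ => x)).
  - intro i; apply (proj1 (principal_cong_congruence (e C i))).
Qed.

Lemma central_C2 :
  central C a -> forall x : nat -> nat -> C,
  q C a (fun i => q C a (x i)) = q C a (fun i => x i i).
Proof.
  intros Ha x; apply (central_eq_of_coords _ _ (fun i => x i i) Ha); intro i.
  - destruct (principal_cong_congruence (e C i)) as [_ [_ [Htrans _]]].
    apply (Htrans _ (q C a (x i))); apply principal_cong_q_coord.
  - apply (principal_cong_q_coord i (fun i => x i i)).
Qed.

Lemma central_C3 :
  central C a -> forall (y : nat -> C) (z : nat -> nat -> C),
  q C a (fun j => q C (y j) (fun i => z i j)) =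
  q C (q C a y) (fun i => q C a (fun j => z i j)).
Proof.
  intros Ha y z.
  apply (central_eq_of_coords _ _ (fun j => q C (y j) (fun i => z i j)) Ha); intro j.
  - apply (principal_cong_q_coord j (fun j => q C (y j) (fun i => z i j))).
  - destruct (principal_cong_congruence (e C j)) as [_ [_ [_ Hq]]].
    apply Hq; [apply principal_cong_q_coord | intro i].
    apply (principal_cong_q_coord j (fun j => z i j)).
Qed.

Definition spike (i : nat) (x w : C) : nat -> C :=
  fun j => if Nat.eq_dec j i then x else w.

Definition factor_rel (i : nat) (x y : C) : Prop :=
  forall w, q C a (spike i x w) = q C a (spike i y w).

Hypothesis C1 : forall x : C, q C a (fun _ => x) = x.
Hypothesis C2 : forall x : nat -> nat -> C,
  q C a (fun i => q C a (x i)) = q C a (fun i => x i i).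
Hypothesis C3 : forall (y : nat -> C) (z : nat -> nat -> C),
  q C a (fun j => q C (y j) (fun i => z i j)) =
  q C (q C a y) (fun i => q C a (fun j => z i j)).

(* Off position [i] the head [e 0] selects the constant [w] (by N1). *)
Lemma spike_q (i : nat) (x w : C) (s : nat -> C) :
  spike i (q C x s) w =
  fun j => q C (spike i x (e C 0) j) (fun k => spike i (s k) w j).
Proof.
  extensionality j; unfold spike.
  destruct (Nat.eq_dec j i); [reflexivity | now rewrite N1].
Qed.

Lemma factor_rel_congruence (i : nat) : congruence C (factor_rel i).
Proof.
  unfold factor_rel; split; [|split; [|split]].
  - reflexivity.
  - intros x y Hxy w; symmetry; apply Hxy.
  - intros x y z Hxy Hyz w; rewrite Hxy; apply Hyz.
  - intros x y s t Hxy Hst w.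
    rewrite (spike_q i x w s), (spike_q i y w t), !C3, (Hxy (e C 0)).
    f_equal; extensionality k; apply Hst.
Qed.

(* Both sides are instances of (C2), after writing every entry as [q a] of a
   sequence using (N2) or (C1). *)
Lemma factor_rel_a_e (i : nat) : factor_rel i a (e C i).
Proof.
  intro w.
  assert (Ha : spike i a w =
    fun j => q C a (if Nat.eq_dec j i then e C else fun _ => w)).
  { extensionality j; unfold spike.
    destruct (Nat.eq_dec j i); [now rewrite N2 | now rewrite C1]. }
  assert (He : spike i (e C i) w =
    fun j => q C a (if Nat.eq_dec j i then fun _ => e C i else fun _ => w)).
  { extensionality j; unfold spike.
    destruct (Nat.eq_dec j i); now rewrite C1. }
  rewrite Ha, He, !C2; f_equal; extensionality j.
  destruct (Nat.eq_dec j i); subst; reflexivity.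
Qed.

Lemma principal_cong_sub_factor_rel (i : nat) (x y : C) :
  principal_cong C a (e C i) x y -> factor_rel i x y.
Proof. intro H; apply H; [apply factor_rel_congruence | apply factor_rel_a_e]. Qed.

Lemma q_spike_diag (x y : C) : q C a (fun i => q C a (spike i x y)) = x.
Proof.
  rewrite C2, <- (C1 x) at 1; f_equal; extensionality j.
  unfold spike; destruct (Nat.eq_dec j j); [reflexivity | contradiction].
Qed.

Lemma factor_rel_separates (x y : C) : (forall i, factor_rel i x y) -> x = y.
Proof.
  intro Hxy.
  assert (Hyy : forall i, spike i y y = fun _ => y).
  { intro i; extensionality j; unfold spike; now destruct (Nat.eq_dec j i). }
  rewrite <- (q_spike_diag x y).
  transitivity (q C a (fun i => q C a (spike i y y))).
  - f_equal; extensionality i; apply Hxy.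
  - transitivity (q C a (fun _ => y)); [|apply C1].
    f_equal; extensionality i; now rewrite Hyy, C1.
Qed.

Lemma central_of_C123 : central C a.
Proof.
  split; [|split].
  - intro i; apply principal_cong_congruence.
  - intros x y Hxy; apply factor_rel_separates.
    intro i; apply principal_cong_sub_factor_rel, Hxy.
  - intro s; exists (q C a s); intro i; apply principal_cong_q_coord.
Qed.

End Central.

Theorem lemma6p12 (tau : Type) (C : ICA tau) (a : C) :
  central C a <->
  ((forall x : C, q C a (fun _ => x) = x) /\
   (forall x : nat -> nat -> C,
      q C a (fun i => q C a (x i)) = q C a (fun i => x i i)) /\
   (forall (y : nat -> C) (z : nat -> nat -> C),
      q C a (fun j => q C (y j) (fun i => z i j)) =
      q C (q C a y) (fun i => q C a (fun j => z i j)))).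
Proof.
  split.
  - intro Ha; split; [|split].
    + apply central_C1, Ha.
    + apply central_C2, Ha.
    + apply central_C3, Ha.
  - intros [HC1 [HC2 HC3]]; apply central_of_C123; assumption.
Qed.
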